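(* The equivalence groupoid of the class $\bar{\mathcal L}_0$ consists of the triples $(\bar\theta,\varphi,\tilde{\bar\theta})$ such that $\varphi$ has components \[ \tilde t=T,\quad \tilde x=T_tU^1x+X^0,\quad \tilde u=U^1u-U^1_tx+U^{00},\qquad\text{with } U^1=c_1Y^1+c_0,\ U^{00}=c_2-c_1Y^2, \] the tuples are related by \[ \tilde A^2=(U^1)^2T_tA^2,\quad \tilde A^{11}=\frac1{T_t}\left(A^{11}-\frac{T_{tt}}{T_t}-\frac{2U^1_t}{U^1}\right),\quad \tilde A^{10}=U^1A^{10}-\frac{X^0_t}{T_t}+U^{00}-\frac{X^0}{T_t}\left(A^{11}-\frac{T_{tt}}{T_t}-\frac{2U^1_t}{U^1}\right), \] \[ \tilde Y^0=Y^0+\ln\frac{\delta}{T_t(c_1Y^1+c_0)^2},\quad \tilde Y^1=\frac{c_1'Y^1+c_0'}{c_1Y^1+c_0},\quad \tilde Y^2=\frac{\delta Y^2}{c_1Y^1+c_0}-\frac{\delta X^0{\rm e}^{Y^0}}{T_t(c_1Y^1+c_0)^2}-c_2\frac{c_1'Y^1+c_0'}{c_1Y^1+c_0}+c_3, \] where $\delta=c_1'c_0-c_1c_0'$, $T$ and $X^0$ are arbitrary smooth functions of $t$, and $c_0,c_1,c_2,c_3,c_0',c_1'$ are arbitrary constants with $\delta T_t>0$.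
   Context: All functions are smooth. $\bar{\mathcal L}_0$ is the class of equations $u_t+uu_x=A^2(t,x)u_{xx}+\big(A^{11}(t)x+A^{10}(t)\big)u_x$ for $u(t,x)$ parameterized by the extended arbitrary-element tuple $\bar\theta=(A^{10},A^{11},A^2,Y^0,Y^1,Y^2)$, where $A^2$ is a smooth nonvanishing function of $(t,x)$, and $A^{10},A^{11},Y^0,Y^1,Y^2$ are smooth functions of $t$ only satisfying $Y^0_t=A^{11}$, $Y^1_t={\rm e}^{Y^0}$, $Y^2_t=A^{10}{\rm e}^{Y^0}$ (superscripts are indices, not exponents). The equivalence groupoid is the set of admissible transformations: triples (source tuple, point transformation in $(t,x,u)$, target tuple) such that the point transformation maps the source equation to the target equation, both in the class. In the relations, left-hand sides are evaluated at the new variables and right-hand sides at the old ones. *)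

From Stdlib Require Import Reals.
From Coquelicot Require Import Coquelicot.
Open Scope R_scope.

Definition smooth1 (f : R -> R) : Prop := forall (n : nat) (t : R), ex_derive_n f n t.

Definition pd2_1 (f : R -> R -> R) : R -> R -> R := fun t x => Derive (fun s => f s x) t.
Definition pd2_2 (f : R -> R -> R) : R -> R -> R := fun t x => Derive (fun s => f t s) x.

Fixpoint C2n (n : nat) (f : R -> R -> R) : Prop :=
  match n with
  | O => forall t x, continuous (fun p : R * R => f (fst p) (snd p)) (t, x)
  | S m => (forall t x, ex_derive (fun s => f s x) t /\ ex_derive (fun s => f t s) x)
           /\ C2n m (pd2_1 f) /\ C2n m (pd2_2 f)
  end.
Definition smooth2 (f : R -> R -> R) : Prop := forall n, C2n n f.

Definition pd3_1 (f : R -> R -> R -> R) : R -> R -> R -> R :=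
  fun t x u => Derive (fun s => f s x u) t.
Definition pd3_2 (f : R -> R -> R -> R) : R -> R -> R -> R :=
  fun t x u => Derive (fun s => f t s u) x.
Definition pd3_3 (f : R -> R -> R -> R) : R -> R -> R -> R :=
  fun t x u => Derive (fun s => f t x s) u.

Fixpoint C3n (n : nat) (f : R -> R -> R -> R) : Prop :=
  match n with
  | O => forall t x u,
      continuous (fun p : R * R * R => f (fst (fst p)) (snd (fst p)) (snd p)) (t, x, u)
  | S m => (forall t x u, ex_derive (fun s => f s x u) t /\ ex_derive (fun s => f t s u) x
                          /\ ex_derive (fun s => f t x s) u)
           /\ C3n m (pd3_1 f) /\ C3n m (pd3_2 f) /\ C3n m (pd3_3 f)
  end.
Definition smooth3 (f : R -> R -> R -> R) : Prop := forall n, C3n n f.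

Record tuple := mkTuple {
  A10 : R -> R;
  A11 : R -> R;
  A2  : R -> R -> R;
  Y0  : R -> R;
  Y1  : R -> R;
  Y2  : R -> R }.

Definition in_class (th : tuple) : Prop :=
  smooth1 (A10 th) /\ smooth1 (A11 th) /\ smooth2 (A2 th) /\
  smooth1 (Y0 th) /\ smooth1 (Y1 th) /\ smooth1 (Y2 th) /\
  (forall t x, A2 th t x <> 0) /\
  (forall t, Derive (Y0 th) t = A11 th t) /\
  (forall t, Derive (Y1 th) t = exp (Y0 th t)) /\
  (forall t, Derive (Y2 th) t = A10 th t * exp (Y0 th t)).

Record ptrans := mkPtrans {
  PT : R -> R -> R -> R;
  PX : R -> R -> R -> R;
  PU : R -> R -> R -> R }.

Definition jacobian (phi : ptrans) (t x u : R) : R :=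
  let a11 := pd3_1 (PT phi) t x u in let a12 := pd3_2 (PT phi) t x u in
  let a13 := pd3_3 (PT phi) t x u in
  let a21 := pd3_1 (PX phi) t x u in let a22 := pd3_2 (PX phi) t x u in
  let a23 := pd3_3 (PX phi) t x u in
  let a31 := pd3_1 (PU phi) t x u in let a32 := pd3_2 (PU phi) t x u in
  let a33 := pd3_3 (PU phi) t x u in
  a11 * (a22 * a33 - a23 * a32) - a12 * (a21 * a33 - a23 * a31)
  + a13 * (a21 * a32 - a22 * a31).

Definition point_transf (phi : ptrans) : Prop :=
  smooth3 (PT phi) /\ smooth3 (PX phi) /\ smooth3 (PU phi) /\
  (forall t x u, jacobian phi t x u <> 0).

Definition Dt0 (F : R -> R -> R -> R) (t x u ut : R) : R :=
  pd3_1 F t x u + ut * pd3_3 F t x u.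
Definition Dx0 (F : R -> R -> R -> R) (t x u ux : R) : R :=
  pd3_2 F t x u + ux * pd3_3 F t x u.

Definition pdet (phi : ptrans) (t x u ut ux : R) : R :=
  Dt0 (PT phi) t x u ut * Dx0 (PX phi) t x u ux
  - Dt0 (PX phi) t x u ut * Dx0 (PT phi) t x u ux.

Definition new_ut (phi : ptrans) (t x u ut ux : R) : R :=
  (Dt0 (PU phi) t x u ut * Dx0 (PX phi) t x u ux
   - Dt0 (PX phi) t x u ut * Dx0 (PU phi) t x u ux) / pdet phi t x u ut ux.
Definition new_ux (phi : ptrans) (t x u ut ux : R) : R :=
  (Dt0 (PT phi) t x u ut * Dx0 (PU phi) t x u ux
   - Dx0 (PT phi) t x u ux * Dt0 (PU phi) t x u ut) / pdet phi t x u ut ux.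

Definition Dt1 (H : R -> R -> R -> R -> R -> R) (t x u ut ux utt utx : R) : R :=
  Derive (fun s => H s x u ut ux) t + ut * Derive (fun s => H t x s ut ux) u
  + utt * Derive (fun s => H t x u s ux) ut + utx * Derive (fun s => H t x u ut s) ux.
Definition Dx1 (H : R -> R -> R -> R -> R -> R) (t x u ut ux utx uxx : R) : R :=
  Derive (fun s => H t s u ut ux) x + ux * Derive (fun s => H t x s ut ux) u
  + utx * Derive (fun s => H t x u s ux) ut + uxx * Derive (fun s => H t x u ut s) ux.

Definition new_uxx (phi : ptrans) (t x u ut ux utt utx uxx : R) : R :=
  (Dt0 (PT phi) t x u ut * Dx1 (new_ux phi) t x u ut ux utx uxx
   - Dx0 (PT phi) t x u ux * Dt1 (new_ux phi) t x u ut ux utt utx)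
  / pdet phi t x u ut ux.

Definition eqL (th : tuple) (t x u ut ux uxx : R) : R :=
  ut + u * ux - A2 th t x * uxx - (A11 th t * x + A10 th t) * ux.

(* phi maps L_theta to L_theta~ : the second prolongation of phi sends every
   point of the equation manifold of L_theta (in J^2, where the prolongation
   is defined) to a point of the equation manifold of L_theta~. *)
Definition maps_eq (th : tuple) (phi : ptrans) (th' : tuple) : Prop :=
  forall t x u ut ux utt utx uxx,
    pdet phi t x u ut ux <> 0 ->
    eqL th t x u ut ux uxx = 0 ->
    eqL th' (PT phi t x u) (PX phi t x u) (PU phi t x u)
        (new_ut phi t x u ut ux) (new_ux phi t x u ut ux)
        (new_uxx phi t x u ut ux utt utx uxx) = 0.

Definition admissible (th : tuple) (phi : ptrans) (th' : tuple) : Prop :=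
  in_class th /\ in_class th' /\ point_transf phi /\ maps_eq th phi th'.

From Stdlib Require Import Reals Lra Lia FunctionalExtensionality.
From Coquelicot Require Import Coquelicot.
Open Scope R_scope.

(* Since u_tt does not occur in the source equation, the
   u_tt-dependence forces T_x = T_u = 0; the u_xx-dependence forces X_u = 0 together with the
   rule for A^2; splitting what remains with respect to u_x and u shows that
   U = U^1 u + U^0 with X_x = T_t U^1, U^1_x = 0, U^0_x = -U^1_t, gives the rules for A^11
   and A^10, and leaves the linear ODEs U^1_tt = A^11 U^1_t and U^00_t = -A^10 U^1_t.  As
   Y^0_t = A^11, Y^1_t = e^Y^0 and Y^2_t = A^10 e^Y^0, they integrate to U^1 = c_1 Y^1 + c_0
   and U^00 = c_2 - c_1 Y^2, and the rules for the Y's follow by checking that suitable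
   combinations have zero derivative.  Conversely, every transformation of this form maps
   the equations into each other by direct computation. *)

Ltac eta_reduce :=
  repeat match goal with
         | |- context [fun y : R => ?F y] => progress change (fun y : R => F y) with F
         end.

Lemma ex_derive_continuity_pt (f : R -> R) (x : R) : ex_derive f x -> continuity_pt f x.
Proof.
  intro H. apply continuity_pt_filterlim.
  apply (ex_derive_continuous (V := R_NormedModule)); exact H.
Qed.

Lemma is_derive_zero_const (f : R -> R) :
  (forall x, is_derive f x 0) -> forall a b, f a = f b.
Proof.
  intros H a b.
  destruct (MVT_gen f a b (fun _ => 0)) as [c [_ Hc]].
  - intros; apply H.
  - intros; apply ex_derive_continuity_pt; eexists; apply H.
  - lra.
Qed.

Lemma Derive_zero_const (f : R -> R) :
  (forall x, ex_derive f x) -> (forall x, Derive f x = 0) -> forall a b, f a = f b.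
Proof.
  intros Hf HD. apply is_derive_zero_const; intro x. rewrite <- (HD x). now apply Derive_correct.
Qed.

Lemma Derive_const_affine (f : R -> R) (k : R) :
  (forall x, ex_derive f x) -> (forall x, Derive f x = k) -> forall x, f x = k * x + f 0.
Proof.
  intros Hf HD x.
  enough (E : f x - k * x = f 0 - k * 0) by lra.
  apply (is_derive_zero_const (fun s => f s - k * s)). intro s.
  auto_derive; [apply Hf | eta_reduce; rewrite HD; ring].
Qed.

Lemma continuous_eq0_off_point (F : R -> R) (t0 : R) :
  ex_derive F t0 -> (forall t, t <> t0 -> F t = 0) -> F t0 = 0.
Proof.
  intros HF HZ. apply ex_derive_continuity_pt in HF.
  destruct (Req_dec (F t0) 0) as [E|E]; auto. exfalso.
  destruct (HF (Rabs (F t0)) (Rabs_pos_lt _ E)) as [alp [Halp H2]].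
  specialize (H2 (t0 + alp / 2)). simpl in H2. unfold R_dist, D_x, no_cond in H2.
  rewrite HZ, Rminus_0_l, Rabs_Ropp in H2 by lra.
  assert (Rabs (F t0) < Rabs (F t0)); [|lra].
  apply H2. repeat split; [lra|]. replace (t0 + alp / 2 - t0) with (alp / 2) by ring.
  rewrite Rabs_right; lra.
Qed.

Definition ex_derive_upto (n : nat) (f : R -> R) : Prop :=
  forall k t, (k <= n)%nat -> ex_derive_n f k t.

Lemma Derive_n_Derive f n t : Derive_n (Derive f) n t = Derive_n f (S n) t.
Proof.
  rewrite <- (Nat.add_1_r n), <- Derive_n_comp. now apply Derive_n_ext.
Qed.

Lemma ex_derive_n_Derive f n t :
  ex_derive_n (Derive f) (S n) t <-> ex_derive_n f (S (S n)) t.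
Proof. split; apply ex_derive_ext; intro s; now rewrite Derive_n_Derive. Qed.

Lemma ex_derive_upto_S n f :
  ex_derive_upto (S n) f <-> (forall t, ex_derive f t) /\ ex_derive_upto n (Derive f).
Proof.
  split.
  - intro H. split; [intro t; exact (H 1%nat t ltac:(lia))|].
    intros [|k] t Hk; [exact I|]. apply (proj2 (ex_derive_n_Derive f k t)), H. lia.
  - intros [H1 H2] [|[|k]] t Hk; [exact I | exact (H1 t) |].
    apply (proj1 (ex_derive_n_Derive f k t)), H2. lia.
Qed.

Lemma ex_derive_upto_le m n f : (m <= n)%nat -> ex_derive_upto n f -> ex_derive_upto m f.
Proof. intros Hmn H k t Hk. apply H. lia. Qed.

Lemma ex_derive_upto_ext n f g :
  (forall t, f t = g t) -> ex_derive_upto n f -> ex_derive_upto n g.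
Proof. intros E H k t Hk. apply (ex_derive_n_ext f); auto. Qed.

Lemma ex_derive_upto_plus n f g :
  ex_derive_upto n f -> ex_derive_upto n g -> ex_derive_upto n (fun t => f t + g t).
Proof.
  intros Hf Hg k t Hk.
  apply ex_derive_n_plus; apply filter_forall; intros y j Hj; [apply Hf | apply Hg]; lia.
Qed.

Lemma ex_derive_upto_mult n : forall f g,
  ex_derive_upto n f -> ex_derive_upto n g -> ex_derive_upto n (fun t => f t * g t).
Proof.
  induction n as [|n IH]; intros f g Hf Hg.
  - intros k t Hk. replace k with 0%nat by lia. exact I.
  - pose proof (ex_derive_upto_le n (S n) f ltac:(lia) Hf) as Hfn.
    pose proof (ex_derive_upto_le n (S n) g ltac:(lia) Hg) as Hgn.
    apply ex_derive_upto_S in Hf as [Hf1 Hf']. apply ex_derive_upto_S in Hg as [Hg1 Hg'].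
    apply ex_derive_upto_S. split; [intro t; now apply ex_derive_mult|].
    apply (ex_derive_upto_ext n (fun t => Derive f t * g t + f t * Derive g t)).
    + intro t. symmetry. now apply Derive_mult.
    + apply ex_derive_upto_plus; apply IH; assumption.
Qed.

Lemma smooth1_ex_derive_upto f : smooth1 f <-> forall n, ex_derive_upto n f.
Proof. split; [intros H n k t _; apply H | intros H n t; now apply (H n)]. Qed.

Lemma smooth1_ex_derive f t : smooth1 f -> ex_derive f t.
Proof. intro H. exact (H 1%nat t). Qed.

Lemma smooth1_Derive f : smooth1 f -> smooth1 (Derive f).
Proof. intros H [|n] t; [exact I|]. apply (proj2 (ex_derive_n_Derive f n t)), H. Qed.

Lemma smooth1_const c : smooth1 (fun _ => c).
Proof. intros n t. apply ex_derive_n_const. Qed.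

Lemma smooth1_opp f : smooth1 f -> smooth1 (fun t => - f t).
Proof. intros H n t. now apply ex_derive_n_opp. Qed.

Lemma smooth1_plus f g : smooth1 f -> smooth1 g -> smooth1 (fun t => f t + g t).
Proof.
  rewrite !smooth1_ex_derive_upto. intros Hf Hg n. now apply ex_derive_upto_plus.
Qed.

Lemma smooth1_mult f g : smooth1 f -> smooth1 g -> smooth1 (fun t => f t * g t).
Proof.
  rewrite !smooth1_ex_derive_upto. intros Hf Hg n. now apply ex_derive_upto_mult.
Qed.

#[local] Hint Resolve smooth1_ex_derive smooth1_Derive smooth1_const : core.

Section Smooth3.
Variable f : R -> R -> R -> R.
Hypothesis Hf : smooth3 f.

Lemma smooth3_ex_derive_t t x u : ex_derive (fun s => f s x u) t.
Proof. exact (proj1 (proj1 (Hf 1%nat) t x u)). Qed.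
Lemma smooth3_ex_derive_x t x u : ex_derive (fun s => f t s u) x.
Proof. exact (proj1 (proj2 (proj1 (Hf 1%nat) t x u))). Qed.
Lemma smooth3_ex_derive_u t x u : ex_derive (fun s => f t x s) u.
Proof. exact (proj2 (proj2 (proj1 (Hf 1%nat) t x u))). Qed.

Lemma smooth3_pd3_1 : smooth3 (pd3_1 f).
Proof. intro n. exact (proj1 (proj2 (Hf (S n)))). Qed.
Lemma smooth3_pd3_2 : smooth3 (pd3_2 f).
Proof. intro n. exact (proj1 (proj2 (proj2 (Hf (S n))))). Qed.
Lemma smooth3_pd3_3 : smooth3 (pd3_3 f).
Proof. intro n. exact (proj2 (proj2 (proj2 (Hf (S n))))). Qed.

End Smooth3.

Lemma smooth3_slice_t f x u : smooth3 f -> smooth1 (fun t => f t x u).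
Proof.
  intro Hf. apply smooth1_ex_derive_upto. intro n. revert f Hf.
  induction n as [|n IH]; intros f Hf.
  - intros k t Hk. replace k with 0%nat by lia. exact I.
  - apply ex_derive_upto_S. split; [intro t; exact (smooth3_ex_derive_t f Hf t x u)|].
    change (ex_derive_upto n (fun t => pd3_1 f t x u)). exact (IH _ (smooth3_pd3_1 f Hf)).
Qed.

Definition affine_xu (a b c : R -> R) : R -> R -> R -> R :=
  fun t x u => a t + b t * x + c t * u.

Section AffineXU.
Variables a b c : R -> R.

Lemma pd3_1_affine_xu t x u : ex_derive a t -> ex_derive b t -> ex_derive c t ->
  pd3_1 (affine_xu a b c) t x u = Derive a t + Derive b t * x + Derive c t * u.
Proof.
  intros. unfold pd3_1, affine_xu. apply is_derive_unique.
  auto_derive; auto. eta_reduce. ring.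
Qed.

Lemma pd3_2_affine_xu t x u : pd3_2 (affine_xu a b c) t x u = b t.
Proof. unfold pd3_2, affine_xu. apply is_derive_unique. auto_derive; auto. ring. Qed.

Lemma pd3_3_affine_xu t x u : pd3_3 (affine_xu a b c) t x u = c t.
Proof. unfold pd3_3, affine_xu. apply is_derive_unique. auto_derive; auto. ring. Qed.

End AffineXU.

Lemma continuous_in_t (a : R -> R) (p : R * R * R) :
  ex_derive a (fst (fst p)) -> continuous (fun q : R * R * R => a (fst (fst q))) p.
Proof.
  intro H.
  apply (continuous_comp (fun q : R * R * R => fst (fst q)) a).
  - apply (continuous_comp (fun q : R * R * R => fst q) (fun q : R * R => fst q));
      apply continuous_fst.
  - now apply (ex_derive_continuous (V := R_NormedModule)).
Qed.

Lemma functional_extensionality3 (F G : R -> R -> R -> R) :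
  (forall t x u, F t x u = G t x u) -> F = G.
Proof. intro E. do 3 (apply functional_extensionality; intro). apply E. Qed.

Lemma smooth3_affine_xu a b c :
  smooth1 a -> smooth1 b -> smooth1 c -> smooth3 (affine_xu a b c).
Proof.
  intros Ha Hb Hc n. revert a b c Ha Hb Hc.
  induction n as [|n IH]; intros a b c Ha Hb Hc.
  - intros t x u. unfold affine_xu. simpl.
    apply (continuous_plus (fun q : R * R * R => a (fst (fst q)) + b (fst (fst q)) * snd (fst q))
                           (fun q : R * R * R => c (fst (fst q)) * snd q)).
    + apply (continuous_plus (fun q : R * R * R => a (fst (fst q)))
                             (fun q : R * R * R => b (fst (fst q)) * snd (fst q))).
      * apply continuous_in_t; auto.
      * apply (continuous_mult (fun q : R * R * R => b (fst (fst q)))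
                               (fun q : R * R * R => snd (fst q))).
        -- apply continuous_in_t; auto.
        -- apply (continuous_comp (fun q : R * R * R => fst q) (fun q : R * R => snd q));
             [apply continuous_fst | apply continuous_snd].
    + apply (continuous_mult (fun q : R * R * R => c (fst (fst q))) (fun q : R * R * R => snd q)).
      * apply continuous_in_t; auto.
      * apply continuous_snd.
  - split; [|split; [|split]].
    + intros t x u. unfold affine_xu.
      repeat split; auto_derive; repeat split; auto.
    + rewrite (functional_extensionality3 _ (affine_xu (Derive a) (Derive b) (Derive c)));
        [apply IH; auto | intros; apply pd3_1_affine_xu; auto].
    + rewrite (functional_extensionality3 _ (affine_xu b (fun _ => 0) (fun _ => 0)));
        [apply IH; auto | intros; rewrite pd3_2_affine_xu; unfold affine_xu; ring].
    + rewrite (functional_extensionality3 _ (affine_xu c (fun _ => 0) (fun _ => 0)));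
        [apply IH; auto | intros; rewrite pd3_3_affine_xu; unfold affine_xu; ring].
Qed.

(** * The class and the transformed equation *)

Section ClassFacts.
Variable th : tuple.
Hypothesis Hth : in_class th.

Lemma in_class_smooth_Y0 : smooth1 (Y0 th).
Proof. apply Hth. Qed.
Lemma in_class_smooth_Y1 : smooth1 (Y1 th).
Proof. apply Hth. Qed.
Lemma in_class_smooth_Y2 : smooth1 (Y2 th).
Proof. apply Hth. Qed.
Lemma in_class_Derive_Y0 t : Derive (Y0 th) t = A11 th t.
Proof. apply Hth. Qed.
Lemma in_class_Derive_Y1 t : Derive (Y1 th) t = exp (Y0 th t).
Proof. apply Hth. Qed.
Lemma in_class_Derive_Y2 t : Derive (Y2 th) t = A10 th t * exp (Y0 th t).
Proof. apply Hth. Qed.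

Lemma in_class_A2_neq0 t x : A2 th t x <> 0.
Proof. apply Hth. Qed.

End ClassFacts.

Lemma in_class_Y1_injective th : in_class th -> forall a b, Y1 th a = Y1 th b -> a = b.
Proof.
  intros Hth a b E. destruct (Req_dec a b) as [|Hab]; [assumption|]. exfalso.
  pose proof (in_class_smooth_Y1 th Hth) as HsY1.
  destruct (MVT_gen (Y1 th) a b (fun s => exp (Y0 th s))) as [c [_ Hc]].
  - intros s _. rewrite <- (in_class_Derive_Y1 th Hth). now apply Derive_correct, smooth1_ex_derive.
  - intros s _. now apply ex_derive_continuity_pt, smooth1_ex_derive.
  - rewrite E, Rminus_diag in Hc. pose proof (exp_pos (Y0 th c)).
    assert (b - a <> 0) by lra. symmetry in Hc.
    apply Rmult_integral in Hc as [|]; [lra | contradiction].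
Qed.

Definition target_eqL (th' : tuple) (phi : ptrans) (t x u ut ux utt utx uxx : R) : R :=
  eqL th' (PT phi t x u) (PX phi t x u) (PU phi t x u)
      (new_ut phi t x u ut ux) (new_ux phi t x u ut ux)
      (new_uxx phi t x u ut ux utt utx uxx).

Lemma Derive_new_ux_ut phi t x u ut ux : pdet phi t x u ut ux <> 0 ->
  Derive (fun s => new_ux phi t x u s ux) ut
  = - Dx0 (PT phi) t x u ux * jacobian phi t x u / (pdet phi t x u ut ux) ^ 2.
Proof.
  unfold new_ux, pdet, Dt0, Dx0, jacobian. intro Hp.
  apply is_derive_unique. auto_derive; [exact Hp | field; exact Hp].
Qed.

Lemma target_eqL_utt_slope th' phi t x u ut ux utx uxx : pdet phi t x u ut ux <> 0 ->
  target_eqL th' phi t x u ut ux 1 utx uxx - target_eqL th' phi t x u ut ux 0 utx uxx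
  = - A2 th' (PT phi t x u) (PX phi t x u) * (Dx0 (PT phi) t x u ux) ^ 2
      * jacobian phi t x u / (pdet phi t x u ut ux) ^ 3.
Proof.
  intro Hp. unfold target_eqL, eqL, new_uxx, Dt1. rewrite Derive_new_ux_ut by exact Hp.
  field. exact Hp.
Qed.

Lemma affine_forms_product_eq0 (a b m1 m2 m3 : R) :
  (m1 <> 0 \/ m2 <> 0 \/ m3 <> 0) ->
  (forall z y, (a + y * b) * (m1 + z * m2 + y * m3) = 0) -> a = 0 /\ b = 0.
Proof.
  intros Hm H.
  pose proof (H 0 0) as H00. pose proof (H 1 0) as H10. pose proof (H 0 1) as H01.
  pose proof (H 0 (-1)) as H0m. pose proof (H 1 1) as H11.
  assert (E1 : a * m1 = 0) by lra.
  assert (E2 : a * m2 = 0) by nra.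
  assert (E3 : b * m2 = 0) by nra.
  assert (E4 : b * m3 = 0) by nra.
  assert (E5 : a * m3 + b * m1 = 0) by nra.
  destruct Hm as [Hm|[Hm|Hm]].
  - assert (a = 0) by (apply (Rmult_eq_reg_r m1); lra). subst a.
    split; [reflexivity|]. apply (Rmult_eq_reg_r m1); lra.
  - split; [apply (Rmult_eq_reg_r m2) | apply (Rmult_eq_reg_r m2)]; lra.
  - assert (b = 0) by (apply (Rmult_eq_reg_r m3); lra). subst b.
    split; [|reflexivity]. apply (Rmult_eq_reg_r m3); lra.
Qed.

Section FiberPreserving.
Variables (th th' : tuple) (phi : ptrans).
Hypothesis Hth : in_class th.
Hypothesis Hth' : in_class th'.
Hypothesis Hphi : point_transf phi.
Hypothesis Hmaps : maps_eq th phi th'.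

Lemma Dx0_PT_eq0 t x u ut ux : pdet phi t x u ut ux <> 0 -> Dx0 (PT phi) t x u ux = 0.
Proof.
  intro Hp.
  set (uxx := (ut + u * ux - (A11 th t * x + A10 th t) * ux) / A2 th t x).
  assert (Hsol : eqL th t x u ut ux uxx = 0)
    by (unfold eqL, uxx; field; apply in_class_A2_neq0, Hth).
  (* u_tt does not occur in the source equation *)
  pose proof (target_eqL_utt_slope th' phi t x u ut ux 0 uxx Hp) as Hslope.
  assert (Htarget : forall utt, target_eqL th' phi t x u ut ux utt 0 uxx = 0)
    by (intro; exact (Hmaps _ _ _ _ _ _ _ _ Hp Hsol)).
  rewrite !Htarget in Hslope.
  assert (Z : A2 th' (PT phi t x u) (PX phi t x u) * (Dx0 (PT phi) t x u ux) ^ 2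
              * jacobian phi t x u = 0).
  { apply (Rmult_eq_reg_r (/ (pdet phi t x u ut ux) ^ 3));
      [lra | apply Rinv_neq_0_compat, pow_nonzero, Hp]. }
  apply Rmult_integral in Z as [Z|Z]; [|exfalso; exact (proj2 (proj2 (proj2 Hphi)) t x u Z)].
  apply Rmult_integral in Z as [Z|Z]; [exfalso; exact (in_class_A2_neq0 th' Hth' _ _ Z)|].
  rewrite <- Rsqr_pow2 in Z. now apply Rsqr_0_uniq in Z.
Qed.

Lemma PT_x_u_eq0 t x u : pd3_2 (PT phi) t x u = 0 /\ pd3_3 (PT phi) t x u = 0.
Proof.
  set (M1 := pd3_1 (PT phi) t x u * pd3_2 (PX phi) t x u
              - pd3_1 (PX phi) t x u * pd3_2 (PT phi) t x u).
  set (M2 := pd3_3 (PT phi) t x u * pd3_2 (PX phi) t x u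
              - pd3_3 (PX phi) t x u * pd3_2 (PT phi) t x u).
  set (M3 := pd3_1 (PT phi) t x u * pd3_3 (PX phi) t x u
              - pd3_1 (PX phi) t x u * pd3_3 (PT phi) t x u).
  assert (Epdet : forall ut ux, pdet phi t x u ut ux = M1 + ut * M2 + ux * M3)
    by (intros; unfold pdet, Dt0, Dx0, M1, M2, M3; ring).
  (* D_x T vanishes wherever the affine form pdet does not, and J <> 0 keeps pdet nonzero *)
  apply (affine_forms_product_eq0 _ _ M1 M2 M3).
  - assert (EJ : jacobian phi t x u = pd3_3 (PU phi) t x u * M1 - pd3_1 (PU phi) t x u * M2
                                      - pd3_2 (PU phi) t x u * M3)
      by (unfold jacobian, M1, M2, M3; ring).
    destruct (Req_dec M1 0) as [E1|]; [destruct (Req_dec M2 0) as [E2|];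
      [destruct (Req_dec M3 0) as [E3|]|]|]; auto.
    exfalso. apply (proj2 (proj2 (proj2 Hphi)) t x u). rewrite EJ, E1, E2, E3. ring.
  - intros ut ux. rewrite <- Epdet.
    destruct (Req_dec (pdet phi t x u ut ux) 0) as [E|Hp]; [rewrite E; ring|].
    change (Dx0 (PT phi) t x u ux * pdet phi t x u ut ux = 0).
    rewrite (Dx0_PT_eq0 t x u ut ux Hp). ring.
Qed.

End FiberPreserving.

Lemma pd3_3_eq0_const_u F : smooth3 F -> (forall t x u, pd3_3 F t x u = 0) ->
  forall t x u, F t x u = F t x 0.
Proof.
  intros HF H t x u. apply (Derive_zero_const (fun s => F t x s)); [|intro s; exact (H t x s)].
  intro s. apply (smooth3_ex_derive_u F HF).
Qed.

Lemma pd3_2_eq0_const_x F : smooth3 F -> (forall t x u, pd3_2 F t x u = 0) ->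
  forall t x u, F t x u = F t 0 u.
Proof.
  intros HF H t x u. apply (Derive_zero_const (fun s => F t s u)); [|intro s; exact (H t s u)].
  intro s. apply (smooth3_ex_derive_x F HF).
Qed.

Lemma quadratic_eq0_coeffs a0 a1 a2 :
  (forall y, a0 + a1 * y + a2 * y ^ 2 = 0) -> a0 = 0 /\ a1 = 0 /\ a2 = 0.
Proof. intro H. pose proof (H 0). pose proof (H 1). pose proof (H (-1)). simpl in *. lra. Qed.

Lemma affine_eq0_coeffs a0 a1 : (forall y, a0 + a1 * y = 0) -> a0 = 0 /\ a1 = 0.
Proof. intro H. pose proof (H 0). pose proof (H 1). lra. Qed.

(* The coefficients of u_x^0 and u_x^1 of the transformed equation on the jets
   u_t = (-u + A^11 x + A^10) u_x, u_tt = u_tx = u_xx = 0, in terms of the partial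
   derivatives of a transformation with T_x = T_u = X_u = 0 and of H = U, B2 = A~^2 and
   L = A~^11 X + A~^10. *)
Definition coeff_ux0 (Tt Xt Xx Xxx Ut Ux Uxx B2 L H : R) : R :=
  (Ut * Xx - Xt * Ux) / (Tt * Xx) + H * Ux / Xx - B2 * (Uxx * Xx - Ux * Xxx) / Xx ^ 3
  - L * Ux / Xx.

Definition coeff_ux1 (Tt Xt Xx Xxx Uu Uux Uxu B2 L w H : R) : R :=
  (w * Uu * Xx - Xt * Uu) / (Tt * Xx) + H * Uu / Xx
  - B2 * ((Uux * Xx - Uu * Xxx) / Xx ^ 2 + Uxu / Xx) / Xx - L * Uu / Xx.

Lemma pd3_xu_indep (F : R -> R -> R -> R) (G : R -> R -> R) :
  (forall t x u, F t x u = G t x) ->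
  forall t x u, pd3_1 F t x u = pd2_1 G t x /\ pd3_2 F t x u = pd2_2 G t x /\ pd3_3 F t x u = 0.
Proof.
  intros HF t x u. split; [|split].
  - apply Derive_ext. intro. apply HF.
  - apply Derive_ext. intro. apply HF.
  - unfold pd3_3. rewrite (Derive_ext _ (fun _ => G t x)); [apply Derive_const | intro; apply HF].
Qed.

Section AffineInU.
Variables (F : R -> R -> R -> R) (P Q : R -> R -> R).
Hypothesis HF : forall t x u, F t x u = P t x * u + Q t x.

Lemma pd3_1_affine_u t x u :
  ex_derive (fun s => P s x) t -> ex_derive (fun s => Q s x) t ->
  pd3_1 F t x u = pd2_1 P t x * u + pd2_1 Q t x.
Proof.
  intros HP HQ. unfold pd3_1.
  rewrite (Derive_ext _ (fun s => P s x * u + Q s x)) by (intro; apply HF).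
  apply is_derive_unique. auto_derive; auto. unfold pd2_1. ring.
Qed.

Lemma pd3_2_affine_u t x u :
  ex_derive (fun s => P t s) x -> ex_derive (fun s => Q t s) x ->
  pd3_2 F t x u = pd2_2 P t x * u + pd2_2 Q t x.
Proof.
  intros HP HQ. unfold pd3_2.
  rewrite (Derive_ext _ (fun s => P t s * u + Q t s)) by (intro; apply HF).
  apply is_derive_unique. auto_derive; auto. unfold pd2_2. ring.
Qed.

Lemma pd3_3_affine_u t x u : pd3_3 F t x u = P t x.
Proof.
  unfold pd3_3. rewrite (Derive_ext _ (fun s => P t x * s + Q t x)) by (intro; apply HF).
  apply is_derive_unique. auto_derive; auto. ring.
Qed.

End AffineInU.

Lemma Rdiv_eq0 a b : b <> 0 -> a / b = 0 -> a = 0.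
Proof. intros Hb H. apply (Rmult_eq_reg_r (/ b)); [lra | now apply Rinv_neq_0_compat]. Qed.

Lemma coeff_ux1_affine_u Tt Xt Xx Xxx U1 Uux Uxu B2 L w0 U0 u : Tt <> 0 -> Xx <> 0 ->
  coeff_ux1 Tt Xt Xx Xxx U1 Uux Uxu B2 L (w0 - u) (U1 * u + U0)
  = coeff_ux1 Tt Xt Xx Xxx U1 Uux Uxu B2 L w0 U0 + U1 * (U1 * Tt - Xx) / (Tt * Xx) * u.
Proof. intros. unfold coeff_ux1. field. auto. Qed.

Lemma coeff_ux0_affine_u Tt Xt Xx Xxx U1t U0t U1x U0x U1xx U0xx B2 L U1 U0 u :
  Tt <> 0 -> Xx <> 0 ->
  coeff_ux0 Tt Xt Xx Xxx (U1t * u + U0t) (U1x * u + U0x) (U1xx * u + U0xx) B2 L (U1 * u + U0)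
  = coeff_ux0 Tt Xt Xx Xxx U0t U0x U0xx B2 L U0
    + ((U1t * Xx - Xt * U1x) / (Tt * Xx) + (U1 * U0x + U0 * U1x) / Xx
       - B2 * (U1xx * Xx - U1x * Xxx) / Xx ^ 3 - L * U1x / Xx) * u
    + U1 * U1x / Xx * u ^ 2.
Proof. intros. unfold coeff_ux0. field. auto. Qed.

(** * Admissible transformations have normal form *)

Set Implicit Arguments.
(* The statement with U^1 = u1 and U^00 = U00 not yet integrated: the last two fields are the
   linear ODEs whose solutions are c1 Y^1 + c0 and c2 - c1 Y^2. *)
Record normal_form (th th' : tuple) (phi : ptrans) (T u1 X0 U00 : R -> R) : Prop := {
  nf_smooth_T : smooth1 T;
  nf_smooth_u1 : smooth1 u1;
  nf_smooth_X0 : smooth1 X0;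
  nf_smooth_U00 : smooth1 U00;
  nf_T_t_neq0 : forall t, Derive T t <> 0;
  nf_u1_neq0 : forall t, u1 t <> 0;
  nf_phi : forall t x u,
    PT phi t x u = T t /\ PX phi t x u = Derive T t * u1 t * x + X0 t /\
    PU phi t x u = u1 t * u - Derive u1 t * x + U00 t;
  nf_A2 : forall t x,
    A2 th' (T t) (Derive T t * u1 t * x + X0 t) = u1 t ^ 2 * Derive T t * A2 th t x;
  nf_A11 : forall t,
    A11 th' (T t) = / Derive T t * (A11 th t - Derive (Derive T) t / Derive T t
                                     - 2 * Derive u1 t / u1 t);
  nf_A10 : forall t,
    A10 th' (T t) = u1 t * A10 th t - Derive X0 t / Derive T t + U00 t
                    - X0 t / Derive T t * (A11 th t - Derive (Derive T) t / Derive T t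
                                           - 2 * Derive u1 t / u1 t);
  nf_u1_tt : forall t, Derive (Derive u1) t = A11 th t * Derive u1 t;
  nf_U00_t : forall t, Derive U00 t = - A10 th t * Derive u1 t }.
Unset Implicit Arguments.

Section Forward.
Variables (th th' : tuple) (f g h : R -> R -> R -> R).
Let phi := mkPtrans f g h.
Hypothesis Hth : in_class th.
Hypothesis Hth' : in_class th'.
Hypothesis Hphi : point_transf phi.
Hypothesis Hmaps : maps_eq th phi th'.

Let HA2 := in_class_A2_neq0 th Hth.
Let HA2' := in_class_A2_neq0 th' Hth'.
Let Hf : smooth3 f := proj1 Hphi.
Let Hg : smooth3 g := proj1 (proj2 Hphi).
Let Hh : smooth3 h := proj1 (proj2 (proj2 Hphi)).

Lemma f_x_u_eq0 t x u : pd3_2 f t x u = 0 /\ pd3_3 f t x u = 0.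
Proof. exact (PT_x_u_eq0 th th' phi Hth Hth' Hphi Hmaps t x u). Qed.

Lemma jacobian_f_t_only t x u :
  jacobian phi t x u
  = pd3_1 f t x u * (pd3_3 h t x u * pd3_2 g t x u - pd3_2 h t x u * pd3_3 g t x u).
Proof.
  destruct (f_x_u_eq0 t x u) as [E2 E3]. unfold jacobian. simpl. rewrite E2, E3. ring.
Qed.

Lemma f_t_neq0 t x u : pd3_1 f t x u <> 0.
Proof.
  intro E. apply (proj2 (proj2 (proj2 Hphi)) t x u). rewrite jacobian_f_t_only, E. ring.
Qed.

Lemma gh_minor_neq0 t x u : pd3_3 h t x u * pd3_2 g t x u - pd3_2 h t x u * pd3_3 g t x u <> 0.
Proof.
  intro E. apply (proj2 (proj2 (proj2 Hphi)) t x u). rewrite jacobian_f_t_only, E. ring.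
Qed.

Lemma pdet_f_t_only t x u ut ux : pdet phi t x u ut ux = pd3_1 f t x u * Dx0 g t x u ux.
Proof.
  destruct (f_x_u_eq0 t x u) as [E2 E3]. unfold pdet, Dt0, Dx0. simpl. rewrite E2, E3. ring.
Qed.

Lemma new_ux_f_t_only t x u ut ux : new_ux phi t x u ut ux = Dx0 h t x u ux / Dx0 g t x u ux.
Proof.
  destruct (f_x_u_eq0 t x u) as [E2 E3].
  rewrite <- (Rdiv_mult_l_l (pd3_1 f t x u)) by apply f_t_neq0.
  unfold new_ux. rewrite pdet_f_t_only. unfold Dt0, Dx0. simpl. rewrite E2, E3.
  f_equal. ring.
Qed.

Lemma target_eqL_f_t_only t x u ut ux utt utx uxx : Dx0 g t x u ux <> 0 ->
  target_eqL th' phi t x u ut ux utt utx uxx =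
  (Dt0 h t x u ut * Dx0 g t x u ux - Dt0 g t x u ut * Dx0 h t x u ux)
    / (pd3_1 f t x u * Dx0 g t x u ux)
  + h t x u * (Dx0 h t x u ux / Dx0 g t x u ux)
  - A2 th' (f t x u) (g t x u) *
    (Derive (fun s => Dx0 h t s u ux / Dx0 g t s u ux) x
     + ux * Derive (fun s => Dx0 h t x s ux / Dx0 g t x s ux) u
     + uxx * ((pd3_3 h t x u * pd3_2 g t x u - pd3_2 h t x u * pd3_3 g t x u)
              / (Dx0 g t x u ux) ^ 2)) / Dx0 g t x u ux
  - (A11 th' (f t x u) * g t x u + A10 th' (f t x u)) * (Dx0 h t x u ux / Dx0 g t x u ux).
Proof.
  intro Hq. pose proof (f_t_neq0 t x u).
  assert (Dut : Derive (fun s => new_ux phi t x u s ux) ut = 0).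
  { rewrite (Derive_ext _ (fun _ => Dx0 h t x u ux / Dx0 g t x u ux));
      [apply Derive_const | intro; apply new_ux_f_t_only]. }
  assert (Dux : Derive (fun s => new_ux phi t x u ut s) ux =
     (pd3_3 h t x u * pd3_2 g t x u - pd3_2 h t x u * pd3_3 g t x u) / (Dx0 g t x u ux) ^ 2).
  { rewrite (Derive_ext _ (fun s => Dx0 h t x u s / Dx0 g t x u s));
      [|intro; apply new_ux_f_t_only].
    unfold Dx0 in *. apply is_derive_unique. auto_derive; [exact Hq | field; exact Hq]. }
  assert (Dx : Derive (fun s => new_ux phi t s u ut ux) x
               = Derive (fun s => Dx0 h t s u ux / Dx0 g t s u ux) x)
    by (apply Derive_ext; intro; apply new_ux_f_t_only).
  assert (Du : Derive (fun s => new_ux phi t x s ut ux) u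
               = Derive (fun s => Dx0 h t x s ux / Dx0 g t x s ux) u)
    by (apply Derive_ext; intro; apply new_ux_f_t_only).
  destruct (f_x_u_eq0 t x u) as [E2 E3].
  unfold target_eqL, eqL, new_uxx, Dx1, Dt1. rewrite Dut, Dux, Dx, Du, new_ux_f_t_only.
  unfold new_ut. rewrite pdet_f_t_only. unfold Dt0, Dx0 in *. simpl. rewrite E2, E3.
  field. auto.
Qed.

Lemma target_eqL_uxx_slope t x u ut ux utt utx uxx a : Dx0 g t x u ux <> 0 ->
  target_eqL th' phi t x u (ut + a) ux utt utx (uxx + 1)
  - target_eqL th' phi t x u ut ux utt utx uxx
  = (pd3_3 h t x u * pd3_2 g t x u - pd3_2 h t x u * pd3_3 g t x u)
    * (a * (Dx0 g t x u ux) ^ 2 - A2 th' (f t x u) (g t x u) * pd3_1 f t x u)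
    / (pd3_1 f t x u * (Dx0 g t x u ux) ^ 3).
Proof.
  intro Hq. pose proof (f_t_neq0 t x u).
  rewrite !target_eqL_f_t_only by exact Hq. unfold Dt0, Dx0 in *. field. auto.
Qed.

Lemma A2_Dx0_g t x u ux : Dx0 g t x u ux <> 0 ->
  A2 th t x * (Dx0 g t x u ux) ^ 2 = A2 th' (f t x u) (g t x u) * pd3_1 f t x u.
Proof.
  intro Hq. pose proof (f_t_neq0 t x u) as Hft.
  assert (Hp : forall ut, pdet phi t x u ut ux <> 0)
    by (intro; rewrite pdet_f_t_only; now apply Rmult_integral_contrapositive_currified).
  set (ut := - u * ux + (A11 th t * x + A10 th t) * ux).
  assert (E0 : target_eqL th' phi t x u ut ux 0 0 0 = 0)
    by (apply Hmaps; [apply Hp | unfold eqL, ut; ring]).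
  assert (E1 : target_eqL th' phi t x u (ut + A2 th t x) ux 0 0 (0 + 1) = 0)
    by (apply Hmaps; [apply Hp | unfold eqL, ut; ring]).
  pose proof (target_eqL_uxx_slope t x u ut ux 0 0 0 (A2 th t x) Hq) as Hslope.
  rewrite E0, E1, Rminus_0_r in Hslope. symmetry in Hslope.
  apply Rmult_integral in Hslope as [Z|Z].
  - apply Rmult_integral in Z as [Z|Z]; [exfalso; exact (gh_minor_neq0 t x u Z) | lra].
  - exfalso. revert Z. apply Rinv_neq_0_compat, Rmult_integral_contrapositive_currified; auto.
    now apply pow_nonzero.
Qed.

Lemma g_u_eq0 t x u : pd3_3 g t x u = 0.
Proof.
  destruct (Req_dec (pd3_3 g t x u) 0) as [|Hgu]; auto. exfalso.
  (* A^2 (D_x g)^2 is independent of u_x, while D_x g = g_x + u_x g_u would take the values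
     1 and 2 *)
  assert (Hval : forall v, Dx0 g t x u ((v - pd3_2 g t x u) / pd3_3 g t x u) = v)
    by (intro; unfold Dx0; field; exact Hgu).
  pose proof (A2_Dx0_g t x u ((1 - pd3_2 g t x u) / pd3_3 g t x u)) as K1.
  pose proof (A2_Dx0_g t x u ((2 - pd3_2 g t x u) / pd3_3 g t x u)) as K2.
  rewrite Hval in K1, K2. specialize (K1 ltac:(lra)). specialize (K2 ltac:(lra)).
  apply (HA2 t x). lra.
Qed.

Lemma g_x_neq0 t x u : pd3_2 g t x u <> 0.
Proof.
  intro E. apply (gh_minor_neq0 t x u). rewrite E, g_u_eq0. ring.
Qed.

Lemma h_u_neq0 t x u : pd3_3 h t x u <> 0.
Proof.
  intro E. apply (gh_minor_neq0 t x u). rewrite E, g_u_eq0. ring.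
Qed.

Lemma A2_f_g t x u :
  A2 th' (f t x u) (g t x u) * pd3_1 f t x u = A2 th t x * (pd3_2 g t x u) ^ 2.
Proof.
  pose proof (A2_Dx0_g t x u 0) as K. unfold Dx0 in K.
  rewrite Rmult_0_l, Rplus_0_r in K. rewrite K; [reflexivity | apply g_x_neq0].
Qed.

Lemma g_xu_eq0 t x u : pd3_3 (pd3_2 g) t x u = 0.
Proof.
  pose proof (pd3_3_eq0_const_u g Hg g_u_eq0) as E.
  unfold pd3_3. rewrite (Derive_ext _ (fun _ => pd3_2 g t x 0)); [apply Derive_const|].
  intro s. unfold pd3_2. apply Derive_ext. intro r. apply E.
Qed.

Lemma Derive_new_ux_x t x u ux :
  Derive (fun s => Dx0 h t s u ux / Dx0 g t s u ux) x
  = ((pd3_2 (pd3_2 h) t x u + ux * pd3_2 (pd3_3 h) t x u) * pd3_2 g t x u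
     - Dx0 h t x u ux * pd3_2 (pd3_2 g) t x u) / (pd3_2 g t x u) ^ 2.
Proof.
  pose proof (g_x_neq0 t x u).
  pose proof (smooth3_ex_derive_x _ (smooth3_pd3_2 h Hh) t x u).
  pose proof (smooth3_ex_derive_x _ (smooth3_pd3_3 h Hh) t x u).
  pose proof (smooth3_ex_derive_x _ (smooth3_pd3_2 g Hg) t x u).
  rewrite (Derive_ext _ (fun s => Dx0 h t s u ux / pd3_2 g t s u));
    [|intro s; unfold Dx0; rewrite g_u_eq0; f_equal; ring].
  unfold Dx0. apply is_derive_unique. auto_derive; auto.
  change (Derive (fun y => pd3_2 h t y u) x) with (pd3_2 (pd3_2 h) t x u).
  change (Derive (fun y => pd3_3 h t y u) x) with (pd3_2 (pd3_3 h) t x u).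
  change (Derive (fun y => pd3_2 g t y u) x) with (pd3_2 (pd3_2 g) t x u).
  field. auto.
Qed.

Lemma Derive_new_ux_u t x u ux :
  Derive (fun s => Dx0 h t x s ux / Dx0 g t x s ux) u
  = (pd3_3 (pd3_2 h) t x u + ux * pd3_3 (pd3_3 h) t x u) / pd3_2 g t x u.
Proof.
  pose proof (g_x_neq0 t x u).
  pose proof (smooth3_ex_derive_u _ (smooth3_pd3_2 h Hh) t x u).
  pose proof (smooth3_ex_derive_u _ (smooth3_pd3_3 h Hh) t x u).
  pose proof (smooth3_ex_derive_u _ (smooth3_pd3_2 g Hg) t x u).
  rewrite (Derive_ext _ (fun s => Dx0 h t x s ux / pd3_2 g t x s));
    [|intro s; unfold Dx0; rewrite g_u_eq0; f_equal; ring].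
  unfold Dx0. apply is_derive_unique. auto_derive; auto.
  change (Derive (fun y => pd3_2 h t x y) u) with (pd3_3 (pd3_2 h) t x u).
  change (Derive (fun y => pd3_3 h t x y) u) with (pd3_3 (pd3_3 h) t x u).
  change (Derive (fun y => pd3_2 g t x y) u) with (pd3_3 (pd3_2 g) t x u).
  rewrite g_xu_eq0. field. auto.
Qed.

Let B2 t x u := A2 th' (f t x u) (g t x u).
Let L t x u := A11 th' (f t x u) * g t x u + A10 th' (f t x u).
Let w t x u := - u + A11 th t * x + A10 th t.

Lemma target_eqL_on_jet t x u ux :
  target_eqL th' phi t x u (w t x u * ux) ux 0 0 0
  = coeff_ux0 (pd3_1 f t x u) (pd3_1 g t x u) (pd3_2 g t x u) (pd3_2 (pd3_2 g) t x u)
      (pd3_1 h t x u) (pd3_2 h t x u) (pd3_2 (pd3_2 h) t x u) (B2 t x u) (L t x u) (h t x u)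
    + coeff_ux1 (pd3_1 f t x u) (pd3_1 g t x u) (pd3_2 g t x u) (pd3_2 (pd3_2 g) t x u)
      (pd3_3 h t x u) (pd3_2 (pd3_3 h) t x u) (pd3_3 (pd3_2 h) t x u) (B2 t x u) (L t x u)
      (w t x u) (h t x u) * ux
    + (- B2 t x u * pd3_3 (pd3_3 h) t x u / (pd3_2 g t x u) ^ 2) * ux ^ 2.
Proof.
  pose proof (f_t_neq0 t x u). pose proof (g_x_neq0 t x u).
  assert (Hq : Dx0 g t x u ux = pd3_2 g t x u) by (unfold Dx0; rewrite g_u_eq0; ring).
  rewrite target_eqL_f_t_only by (rewrite Hq; auto).
  rewrite Derive_new_ux_x, Derive_new_ux_u, Hq.
  unfold coeff_ux0, coeff_ux1, B2, L, w, Dt0, Dx0. rewrite g_u_eq0. field. auto.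
Qed.

Lemma on_jet_coeffs t x u :
  coeff_ux0 (pd3_1 f t x u) (pd3_1 g t x u) (pd3_2 g t x u) (pd3_2 (pd3_2 g) t x u)
    (pd3_1 h t x u) (pd3_2 h t x u) (pd3_2 (pd3_2 h) t x u) (B2 t x u) (L t x u) (h t x u) = 0 /\
  coeff_ux1 (pd3_1 f t x u) (pd3_1 g t x u) (pd3_2 g t x u) (pd3_2 (pd3_2 g) t x u)
    (pd3_3 h t x u) (pd3_2 (pd3_3 h) t x u) (pd3_3 (pd3_2 h) t x u) (B2 t x u) (L t x u)
    (w t x u) (h t x u) = 0 /\
  pd3_3 (pd3_3 h) t x u = 0.
Proof.
  pose proof (f_t_neq0 t x u). pose proof (g_x_neq0 t x u).
  assert (Hjet : forall ux, target_eqL th' phi t x u (w t x u * ux) ux 0 0 0 = 0).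
  { intro ux. apply Hmaps; [|unfold eqL, w; ring].
    rewrite pdet_f_t_only. unfold Dx0. rewrite g_u_eq0, Rmult_0_r, Rplus_0_r.
    now apply Rmult_integral_contrapositive_currified. }
  destruct (quadratic_eq0_coeffs _ _ _ (fun ux => eq_trans (eq_sym (target_eqL_on_jet t x u ux))
    (Hjet ux))) as (C0&C1&C2).
  split; [exact C0 | split; [exact C1|]].
  apply (Rmult_eq_reg_l (- B2 t x u / (pd3_2 g t x u) ^ 2)).
  - rewrite Rmult_0_r, <- C2. field. auto.
  - unfold B2. apply Rmult_integral_contrapositive_currified;
      [apply Ropp_neq_0_compat, HA2' | apply Rinv_neq_0_compat, pow_nonzero; auto].
Qed.

Let T (t : R) : R := f t 0 0.
Let X (t x : R) : R := g t x 0.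
Let U1 (t x : R) : R := pd3_3 h t x 0.
Let U0 (t x : R) : R := h t x 0.

Lemma f_eq_T t x u : f t x u = T t.
Proof.
  unfold T. rewrite (pd3_3_eq0_const_u f Hf (fun t x u => proj2 (f_x_u_eq0 t x u))).
  apply (pd3_2_eq0_const_x f Hf (fun t x u => proj1 (f_x_u_eq0 t x u))).
Qed.

Lemma g_eq_X t x u : g t x u = X t x.
Proof. exact (pd3_3_eq0_const_u g Hg g_u_eq0 t x u). Qed.

Lemma h_affine_u t x u : h t x u = U1 t x * u + U0 t x.
Proof.
  apply (Derive_const_affine (fun s => h t x s)).
  - intro s. apply (smooth3_ex_derive_u h Hh).
  - intro s. exact (pd3_3_eq0_const_u _ (smooth3_pd3_3 h Hh)
                      (fun t x u => proj2 (proj2 (on_jet_coeffs t x u))) t x s).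
Qed.

Lemma pd3_1_f t x u : pd3_1 f t x u = Derive T t.
Proof. apply Derive_ext. intro. apply f_eq_T. Qed.

Lemma pd3_g t x u :
  pd3_1 g t x u = pd2_1 X t x /\ pd3_2 g t x u = pd2_2 X t x /\ pd3_3 g t x u = 0.
Proof. exact (pd3_xu_indep g X g_eq_X t x u). Qed.

Lemma pd3_2_pd3_2_g t x u : pd3_2 (pd3_2 g) t x u = pd2_2 (pd2_2 X) t x.
Proof.
  exact (proj1 (proj2 (pd3_xu_indep (pd3_2 g) (pd2_2 X)
                         (fun t x u => proj1 (proj2 (pd3_g t x u))) t x u))).
Qed.

Lemma pd3_h t x u :
  pd3_1 h t x u = pd2_1 U1 t x * u + pd2_1 U0 t x /\
  pd3_2 h t x u = pd2_2 U1 t x * u + pd2_2 U0 t x /\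
  pd3_3 h t x u = U1 t x /\
  pd3_2 (pd3_2 h) t x u = pd2_2 (pd2_2 U1) t x * u + pd2_2 (pd2_2 U0) t x /\
  pd3_2 (pd3_3 h) t x u = pd2_2 U1 t x /\
  pd3_3 (pd3_2 h) t x u = pd2_2 U1 t x.
Proof.
  pose proof (smooth3_pd3_3 h Hh) as Hhu.
  assert (Hhx : forall s y v, pd3_2 h s y v = pd2_2 U1 s y * v + pd2_2 U0 s y)
    by (intros s y v; apply (pd3_2_affine_u h U1 U0 h_affine_u);
        [apply (smooth3_ex_derive_x _ Hhu) | apply (smooth3_ex_derive_x _ Hh)]).
  repeat split.
  - apply (pd3_1_affine_u h U1 U0 h_affine_u);
      [apply (smooth3_ex_derive_t _ Hhu) | apply (smooth3_ex_derive_t _ Hh)].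
  - apply Hhx.
  - apply (pd3_3_affine_u h U1 U0 h_affine_u).
  - apply (pd3_2_affine_u (pd3_2 h) (pd2_2 U1) (pd2_2 U0) Hhx);
      [apply (smooth3_ex_derive_x _ (smooth3_pd3_2 _ Hhu)) |
       apply (smooth3_ex_derive_x _ (smooth3_pd3_2 _ Hh))].
  - apply Derive_ext. intro. apply (pd3_3_affine_u h U1 U0 h_affine_u).
  - apply (pd3_3_affine_u (pd3_2 h) (pd2_2 U1) (pd2_2 U0) Hhx).
Qed.

Lemma T_t_neq0 t : Derive T t <> 0.
Proof. rewrite <- (pd3_1_f t 0 0). apply f_t_neq0. Qed.

Lemma X_x_neq0 t x : pd2_2 X t x <> 0.
Proof. rewrite <- (proj1 (proj2 (pd3_g t x 0))). apply g_x_neq0. Qed.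

Lemma U1_neq0 t x : U1 t x <> 0.
Proof. rewrite <- (proj1 (proj2 (proj2 (pd3_h t x 0)))). apply h_u_neq0. Qed.

Let B2r t x := A2 th' (T t) (X t x).
Let Lr t x := A11 th' (T t) * X t x + A10 th' (T t).

Lemma reduced_coeff_eqs t x u :
  coeff_ux0 (Derive T t) (pd2_1 X t x) (pd2_2 X t x) (pd2_2 (pd2_2 X) t x)
    (pd2_1 U1 t x * u + pd2_1 U0 t x) (pd2_2 U1 t x * u + pd2_2 U0 t x)
    (pd2_2 (pd2_2 U1) t x * u + pd2_2 (pd2_2 U0) t x) (B2r t x) (Lr t x)
    (U1 t x * u + U0 t x) = 0 /\
  coeff_ux1 (Derive T t) (pd2_1 X t x) (pd2_2 X t x) (pd2_2 (pd2_2 X) t x)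
    (U1 t x) (pd2_2 U1 t x) (pd2_2 U1 t x) (B2r t x) (Lr t x)
    (A11 th t * x + A10 th t - u) (U1 t x * u + U0 t x) = 0.
Proof.
  destruct (on_jet_coeffs t x u) as (C0&C1&_).
  destruct (pd3_g t x u) as (Eg1&Eg2&_). pose proof (pd3_2_pd3_2_g t x u) as Egx.
  destruct (pd3_h t x u) as (Eh1&Eh2&Eh3&Ehxx&Ehux&Ehxu).
  unfold B2, L, w in C0, C1.
  rewrite pd3_1_f, Eg1, Eg2, Egx, Eh1, Eh2, Ehxx, f_eq_T, g_eq_X, h_affine_u in C0.
  rewrite pd3_1_f, Eg1, Eg2, Egx, Eh3, Ehux, Ehxu, f_eq_T, g_eq_X, h_affine_u in C1.
  split; [exact C0|]. rewrite <- C1. f_equal. ring.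
Qed.

Lemma reduced_coeffs t x :
  pd2_2 X t x = Derive T t * U1 t x /\ pd2_2 U1 t x = 0 /\
  (pd2_1 U1 t x * pd2_2 X t x - pd2_1 X t x * pd2_2 U1 t x) / (Derive T t * pd2_2 X t x)
    + (U1 t x * pd2_2 U0 t x + U0 t x * pd2_2 U1 t x) / pd2_2 X t x
    - B2r t x * (pd2_2 (pd2_2 U1) t x * pd2_2 X t x - pd2_2 U1 t x * pd2_2 (pd2_2 X) t x)
      / pd2_2 X t x ^ 3
    - Lr t x * pd2_2 U1 t x / pd2_2 X t x = 0 /\
  coeff_ux1 (Derive T t) (pd2_1 X t x) (pd2_2 X t x) (pd2_2 (pd2_2 X) t x)
    (U1 t x) (pd2_2 U1 t x) (pd2_2 U1 t x) (B2r t x) (Lr t x) (A11 th t * x + A10 th t) (U0 t x)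
    = 0 /\
  coeff_ux0 (Derive T t) (pd2_1 X t x) (pd2_2 X t x) (pd2_2 (pd2_2 X) t x)
    (pd2_1 U0 t x) (pd2_2 U0 t x) (pd2_2 (pd2_2 U0) t x) (B2r t x) (Lr t x) (U0 t x) = 0.
Proof.
  pose proof (T_t_neq0 t). pose proof (X_x_neq0 t x). pose proof (U1_neq0 t x).
  pose proof (fun u => proj2 (reduced_coeff_eqs t x u)) as P1.
  pose proof (fun u => proj1 (reduced_coeff_eqs t x u)) as P0.
  setoid_rewrite coeff_ux1_affine_u in P1; auto.
  setoid_rewrite coeff_ux0_affine_u in P0; auto.
  apply affine_eq0_coeffs in P1 as [P1a P1b].
  apply quadratic_eq0_coeffs in P0 as (P0a&P0b&P0c).
  apply Rdiv_eq0 in P1b; [|now apply Rmult_integral_contrapositive_currified].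
  apply Rdiv_eq0 in P0c; [|assumption].
  apply Rmult_integral in P1b as [|P1b]; [contradiction|].
  apply Rmult_integral in P0c as [|P0c]; [contradiction|].
  repeat split; [lra | assumption ..].
Qed.

Lemma U1_x_eq0 t x : pd2_2 U1 t x = 0.
Proof. exact (proj1 (proj2 (reduced_coeffs t x))). Qed.

Lemma U1_xx_eq0 t x : pd2_2 (pd2_2 U1) t x = 0.
Proof.
  unfold pd2_2 at 1. rewrite (Derive_ext _ (fun _ => 0)); [apply Derive_const | apply U1_x_eq0].
Qed.

Lemma U1_t_U0_x t x : pd2_1 U1 t x + pd2_2 U0 t x = 0.
Proof.
  pose proof (T_t_neq0 t). pose proof (U1_neq0 t x).
  destruct (reduced_coeffs t x) as (EXx&EU1x&Hcoeff&_).
  apply (Rdiv_eq0 _ (Derive T t)); [assumption|].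
  etransitivity; [|exact Hcoeff]. rewrite EU1x, U1_xx_eq0, EXx. field. auto.
Qed.

Let u1 (t : R) : R := U1 t 0.

Lemma U1_eq_u1 t x : U1 t x = u1 t.
Proof.
  apply (Derive_zero_const (fun s => U1 t s)); [|exact (U1_x_eq0 t)].
  intro s. apply (smooth3_ex_derive_x _ (smooth3_pd3_3 h Hh)).
Qed.

Lemma X_x_eq t x : pd2_2 X t x = Derive T t * u1 t.
Proof. rewrite <- (U1_eq_u1 t x). exact (proj1 (reduced_coeffs t x)). Qed.

Lemma U0_x_eq t x : pd2_2 U0 t x = - Derive u1 t.
Proof.
  assert (E : pd2_1 U1 t x = Derive u1 t) by (apply Derive_ext; intro; apply U1_eq_u1).
  pose proof (U1_t_U0_x t x). lra.
Qed.

Let X0 (t : R) : R := X t 0.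
Let U00 (t : R) : R := U0 t 0.

Lemma X_affine_x t x : X t x = Derive T t * u1 t * x + X0 t.
Proof.
  apply (Derive_const_affine (fun s => X t s)); [|exact (X_x_eq t)].
  intro s. apply (smooth3_ex_derive_x g Hg).
Qed.

Lemma U0_affine_x t x : U0 t x = - Derive u1 t * x + U00 t.
Proof.
  apply (Derive_const_affine (fun s => U0 t s)); [|exact (U0_x_eq t)].
  intro s. apply (smooth3_ex_derive_x h Hh).
Qed.

Lemma X_xx_eq0 t x : pd2_2 (pd2_2 X) t x = 0.
Proof.
  unfold pd2_2 at 1. rewrite (Derive_ext _ (fun _ => Derive T t * u1 t));
    [apply Derive_const | apply X_x_eq].
Qed.

Lemma U0_xx_eq0 t x : pd2_2 (pd2_2 U0) t x = 0.
Proof.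
  unfold pd2_2 at 1. rewrite (Derive_ext _ (fun _ => - Derive u1 t));
    [apply Derive_const | apply U0_x_eq].
Qed.

Lemma smooth1_T : smooth1 T.
Proof. exact (smooth3_slice_t f 0 0 Hf). Qed.
Lemma smooth1_u1 : smooth1 u1.
Proof. exact (smooth3_slice_t _ 0 0 (smooth3_pd3_3 h Hh)). Qed.
Lemma smooth1_X0 : smooth1 X0.
Proof. exact (smooth3_slice_t g 0 0 Hg). Qed.
Lemma smooth1_U00 : smooth1 U00.
Proof. exact (smooth3_slice_t h 0 0 Hh). Qed.

Lemma X_t_eq t x :
  pd2_1 X t x = (Derive (Derive T) t * u1 t + Derive T t * Derive u1 t) * x + Derive X0 t.
Proof.
  unfold pd2_1. rewrite (Derive_ext _ (fun s => Derive T s * u1 s * x + X0 s))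
    by (intro; apply X_affine_x).
  pose proof smooth1_T. pose proof smooth1_u1. pose proof smooth1_X0.
  apply is_derive_unique. auto_derive; auto. eta_reduce. ring.
Qed.

Lemma U0_t_eq t x : pd2_1 U0 t x = - Derive (Derive u1) t * x + Derive U00 t.
Proof.
  unfold pd2_1. rewrite (Derive_ext _ (fun s => - Derive u1 s * x + U00 s))
    by (intro; apply U0_affine_x).
  pose proof smooth1_u1. pose proof smooth1_U00.
  apply is_derive_unique. auto_derive; auto. eta_reduce. ring.
Qed.

Lemma drift_eq t x :
  Lr t x = (A11 th t * x + A10 th t) * u1 t - pd2_1 X t x / Derive T t + U0 t x.
Proof.
  pose proof (T_t_neq0 t). pose proof (U1_neq0 t 0).
  destruct (reduced_coeffs t x) as (_&_&_&Hcoeff&_).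
  enough (Z : ((A11 th t * x + A10 th t) * u1 t - pd2_1 X t x / Derive T t + U0 t x - Lr t x)
              / Derive T t = 0) by (apply Rdiv_eq0 in Z; [lra | assumption]).
  etransitivity; [|exact Hcoeff].
  rewrite X_x_eq, X_xx_eq0, U1_x_eq0, U1_eq_u1. unfold coeff_ux1, u1. field. auto.
Qed.

Lemma source_eq t x : pd2_1 U0 t x + (A11 th t * x + A10 th t) * Derive u1 t = 0.
Proof.
  pose proof (T_t_neq0 t). pose proof (U1_neq0 t 0).
  destruct (reduced_coeffs t x) as (_&_&_&_&Hcoeff).
  apply (Rdiv_eq0 _ (Derive T t)); [assumption|].
  etransitivity; [|exact Hcoeff].
  rewrite drift_eq, X_x_eq, X_xx_eq0, U0_x_eq, U0_xx_eq0. unfold coeff_ux0, u1. field. auto.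
Qed.

Lemma A2_T_X t x : A2 th' (T t) (X t x) * Derive T t = A2 th t x * (Derive T t * u1 t) ^ 2.
Proof.
  pose proof (A2_f_g t x 0) as E.
  rewrite f_eq_T, g_eq_X, pd3_1_f, (proj1 (proj2 (pd3_g t x 0))), X_x_eq in E. exact E.
Qed.

Lemma drift_affine_x t x :
  A11 th' (T t) * (Derive T t * u1 t * x + X0 t) + A10 th' (T t)
  = (A11 th t * x + A10 th t) * u1 t
    - ((Derive (Derive T) t * u1 t + Derive T t * Derive u1 t) * x + Derive X0 t) / Derive T t
    - Derive u1 t * x + U00 t.
Proof.
  pose proof (drift_eq t x) as E. unfold Lr in E.
  rewrite X_affine_x, X_t_eq, U0_affine_x in E. rewrite E. ring.
Qed.

Lemma A11_transform t :
  A11 th' (T t) = / Derive T t * (A11 th t - Derive (Derive T) t / Derive T t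
                                   - 2 * Derive u1 t / u1 t).
Proof.
  pose proof (T_t_neq0 t). pose proof (U1_neq0 t 0).
  apply (Rmult_eq_reg_r (Derive T t * u1 t));
    [|now apply Rmult_integral_contrapositive_currified].
  transitivity ((A11 th' (T t) * (Derive T t * u1 t * 1 + X0 t) + A10 th' (T t))
                - (A11 th' (T t) * (Derive T t * u1 t * 0 + X0 t) + A10 th' (T t))); [ring|].
  rewrite !drift_affine_x. field. auto.
Qed.

Lemma A10_transform t :
  A10 th' (T t) = u1 t * A10 th t - Derive X0 t / Derive T t + U00 t
                  - X0 t / Derive T t * (A11 th t - Derive (Derive T) t / Derive T t
                                         - 2 * Derive u1 t / u1 t).
Proof.
  pose proof (drift_affine_x t 0) as D0. pose proof (T_t_neq0 t). pose proof (U1_neq0 t 0).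
  rewrite Rmult_0_r, Rplus_0_l in D0.
  apply (Rplus_eq_reg_l (A11 th' (T t) * X0 t)). rewrite D0, A11_transform. field. auto.
Qed.

Lemma source_affine_x t x :
  - Derive (Derive u1) t * x + Derive U00 t + (A11 th t * x + A10 th t) * Derive u1 t = 0.
Proof. rewrite <- U0_t_eq. apply source_eq. Qed.

Lemma normal_form_of_admissible : normal_form th th' phi T u1 X0 U00.
Proof.
  split.
  - exact smooth1_T.
  - exact smooth1_u1.
  - exact smooth1_X0.
  - exact smooth1_U00.
  - exact T_t_neq0.
  - exact (fun t => U1_neq0 t 0).
  - intros t x u. simpl. rewrite f_eq_T, g_eq_X, h_affine_u, U1_eq_u1, X_affine_x, U0_affine_x.
    repeat split. ring.
  - intros t x. pose proof (T_t_neq0 t). rewrite <- X_affine_x.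
    apply (Rmult_eq_reg_r (Derive T t)); [rewrite A2_T_X; ring | assumption].
  - exact A11_transform.
  - exact A10_transform.
  - intro t. pose proof (source_affine_x t 0) as S0. pose proof (source_affine_x t 1) as S1.
    ring_simplify in S0. ring_simplify in S1. lra.
  - intro t. pose proof (source_affine_x t 0) as S0. ring_simplify in S0. lra.
Qed.

End Forward.

(** * Transformations of normal form are admissible *)

Section Verification.
Variables (th th' : tuple) (phi : ptrans) (T u1 X0 U00 : R -> R).
Hypothesis HN : normal_form th th' phi T u1 X0 U00.

Let HsT := nf_smooth_T HN.
Let Hsu1 := nf_smooth_u1 HN.
Let HsX0 := nf_smooth_X0 HN.
Let HsU00 := nf_smooth_U00 HN.
Let HTt := nf_T_t_neq0 HN.
Let Hu1 := nf_u1_neq0 HN.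

Lemma phi_affine_xu :
  PT phi = affine_xu T (fun _ => 0) (fun _ => 0) /\
  PX phi = affine_xu X0 (fun t => Derive T t * u1 t) (fun _ => 0) /\
  PU phi = affine_xu U00 (fun t => - Derive u1 t) u1.
Proof.
  unfold affine_xu. repeat split; apply functional_extensionality3; intros t x u;
    destruct (nf_phi HN t x u) as (E1&E2&E3); [rewrite E1 | rewrite E2 | rewrite E3];
    ring.
Qed.

Lemma pd3_phi t x u :
  pd3_1 (PT phi) t x u = Derive T t /\ pd3_2 (PT phi) t x u = 0 /\ pd3_3 (PT phi) t x u = 0 /\
  pd3_1 (PX phi) t x u
    = Derive X0 t + (Derive (Derive T) t * u1 t + Derive T t * Derive u1 t) * x /\
  pd3_2 (PX phi) t x u = Derive T t * u1 t /\ pd3_3 (PX phi) t x u = 0 /\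
  pd3_1 (PU phi) t x u = Derive U00 t - Derive (Derive u1) t * x + Derive u1 t * u /\
  pd3_2 (PU phi) t x u = - Derive u1 t /\ pd3_3 (PU phi) t x u = u1 t.
Proof.
  destruct phi_affine_xu as (ET&EX&EU). rewrite ET, EX, EU.
  rewrite !pd3_2_affine_xu, !pd3_3_affine_xu, !pd3_1_affine_xu by (auto_derive; auto).
  rewrite !Derive_const, Derive_mult, Derive_opp by auto.
  repeat split; ring.
Qed.

Lemma point_transf_of_normal_form : point_transf phi.
Proof.
  destruct phi_affine_xu as (ET&EX&EU).
  repeat split.
  - rewrite ET. apply smooth3_affine_xu; auto.
  - rewrite EX. apply smooth3_affine_xu; auto. apply smooth1_mult; auto.
  - rewrite EU. apply smooth3_affine_xu; auto. apply smooth1_opp; auto.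
  - intros t x u. pose proof (HTt t). pose proof (Hu1 t).
    destruct (pd3_phi t x u) as (T1&T2&T3&X1&X2&X3&U1&U2&U3).
    unfold jacobian. rewrite T1, T2, T3, X1, X2, X3, U1, U2, U3.
    replace (Derive T t * (Derive T t * u1 t * u1 t - 0 * - Derive u1 t) - _ + _)
      with (Derive T t * (Derive T t * u1 t * u1 t)) by ring.
    repeat apply Rmult_integral_contrapositive_currified; auto.
Qed.

Lemma new_ux_normal_form t x u ut ux :
  new_ux phi t x u ut ux = (ux * u1 t - Derive u1 t) / (Derive T t * u1 t).
Proof.
  pose proof (HTt t). pose proof (Hu1 t).
  destruct (pd3_phi t x u) as (T1&T2&T3&X1&X2&X3&U1&U2&U3).
  unfold new_ux, pdet, Dt0, Dx0. rewrite T1, T2, T3, X1, X2, X3, U1, U2, U3. field. auto.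
Qed.

Lemma maps_eq_of_normal_form : maps_eq th phi th'.
Proof.
  intros t x u ut ux utt utx uxx _ Hsol.
  pose proof (HTt t). pose proof (Hu1 t).
  assert (Hconst : forall F : R -> R,
             (forall s, F s = (ux * u1 t - Derive u1 t) / (Derive T t * u1 t)) ->
             forall s, Derive F s = 0).
  { intros F HF s. rewrite (Derive_ext _ _ s HF). apply Derive_const. }
  assert (Dux : Derive (fun s => new_ux phi t x u ut s) ux = / Derive T t).
  { rewrite (Derive_ext _ (fun s => (s * u1 t - Derive u1 t) / (Derive T t * u1 t)))
      by (intro; apply new_ux_normal_form).
    apply is_derive_unique. auto_derive; [auto | field; auto]. }
  assert (Hut : ut = - u * ux + A2 th t x * uxx + (A11 th t * x + A10 th t) * ux)
    by (unfold eqL in Hsol; lra).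
  destruct (pd3_phi t x u) as (T1&T2&T3&X1&X2&X3&U1&U2&U3).
  destruct (nf_phi HN t x u) as (E1&E2&E3).
  unfold eqL, new_uxx, Dt1, Dx1.
  rewrite !Hconst by (intro; apply new_ux_normal_form).
  rewrite Dux, new_ux_normal_form. unfold new_ut, pdet, Dt0, Dx0.
  rewrite T1, T2, T3, X1, X2, X3, U1, U2, U3, E1, E2, E3.
  rewrite (nf_A2 HN), (nf_A11 HN), (nf_A10 HN),
    (nf_u1_tt HN), (nf_U00_t HN), Hut.
  field. auto.
Qed.

End Verification.

(** * Integration of the normal form *)

Definition explicit_form (th : tuple) (phi : ptrans) (th' : tuple) : Prop :=
  exists (T X0 : R -> R) (c0 c1 c2 c3 c0' c1' : R),
    let delta := c1' * c0 - c1 * c0' in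
    let U1 := fun t => c1 * Y1 th t + c0 in
    let U00 := fun t => c2 - c1 * Y2 th t in
    let Tt := Derive T in
    let Ttt := Derive (Derive T) in
    let U1t := Derive U1 in
    smooth1 T /\ smooth1 X0 /\
    (forall t, delta * Tt t > 0) /\
    (forall t x u,
       PT phi t x u = T t /\
       PX phi t x u = Tt t * U1 t * x + X0 t /\
       PU phi t x u = U1 t * u - U1t t * x + U00 t) /\
    (forall t x,
       A2 th' (T t) (Tt t * U1 t * x + X0 t) = (U1 t) ^ 2 * Tt t * A2 th t x) /\
    (forall t,
       A11 th' (T t) = / Tt t * (A11 th t - Ttt t / Tt t - 2 * U1t t / U1 t) /\
       A10 th' (T t) = U1 t * A10 th t - Derive X0 t / Tt t + U00 t
                       - X0 t / Tt t * (A11 th t - Ttt t / Tt t - 2 * U1t t / U1 t) /\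
       Y0 th' (T t) = Y0 th t + ln (delta / (Tt t * (c1 * Y1 th t + c0) ^ 2)) /\
       Y1 th' (T t) = (c1' * Y1 th t + c0') / (c1 * Y1 th t + c0) /\
       Y2 th' (T t) = delta * Y2 th t / (c1 * Y1 th t + c0)
                      - delta * X0 t * exp (Y0 th t) / (Tt t * (c1 * Y1 th t + c0) ^ 2)
                      + c2 * ((c1' * Y1 th t + c0') / (c1 * Y1 th t + c0)) + c3).

Section Integration.
Variables (th th' : tuple) (phi : ptrans) (T u1 X0 U00 : R -> R).
Hypothesis Hth : in_class th.
Hypothesis Hth' : in_class th'.
Hypothesis HN : normal_form th th' phi T u1 X0 U00.

Let HsY0 := in_class_smooth_Y0 th Hth.
Let HsY1 := in_class_smooth_Y1 th Hth.
Let HsY2 := in_class_smooth_Y2 th Hth.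
Let HsY0' := in_class_smooth_Y0 th' Hth'.
Let HsY1' := in_class_smooth_Y1 th' Hth'.
Let HsY2' := in_class_smooth_Y2 th' Hth'.
Let HsT := nf_smooth_T HN.
Let Hsu1 := nf_smooth_u1 HN.
Let HsX0 := nf_smooth_X0 HN.
Let HsU00 := nf_smooth_U00 HN.
Let HTt := nf_T_t_neq0 HN.
Let Hu1 := nf_u1_neq0 HN.

Let c1 := Derive u1 0 * exp (- Y0 th 0).

Lemma u1_t_eq t : Derive u1 t = c1 * exp (Y0 th t).
Proof.
  assert (E : Derive u1 t * exp (- Y0 th t) = Derive u1 0 * exp (- Y0 th 0)).
  { apply (is_derive_zero_const (fun s => Derive u1 s * exp (- Y0 th s))). intro s.
    auto_derive; auto. eta_reduce.
    rewrite (nf_u1_tt HN), in_class_Derive_Y0 by exact Hth. ring. }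
  unfold c1. rewrite <- E, Rmult_assoc, <- exp_plus, Rplus_opp_l, exp_0. ring.
Qed.

Let dY0 := in_class_Derive_Y0 th Hth.
Let dY1 := in_class_Derive_Y1 th Hth.
Let dY2 := in_class_Derive_Y2 th Hth.
Let dY0' := in_class_Derive_Y0 th' Hth'.
Let dY1' := in_class_Derive_Y1 th' Hth'.
Let dY2' := in_class_Derive_Y2 th' Hth'.

Let c0 := u1 0 - c1 * Y1 th 0.

Lemma u1_eq t : u1 t = c1 * Y1 th t + c0.
Proof.
  enough (E : u1 t - c1 * Y1 th t = u1 0 - c1 * Y1 th 0) by (unfold c0; lra).
  apply (is_derive_zero_const (fun s => u1 s - c1 * Y1 th s)). intro s.
  auto_derive; auto. eta_reduce. rewrite u1_t_eq, dY1. ring.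
Qed.

Let c2 := U00 0 + c1 * Y2 th 0.

Lemma U00_eq t : U00 t = c2 - c1 * Y2 th t.
Proof.
  enough (E : U00 t + c1 * Y2 th t = U00 0 + c1 * Y2 th 0) by (unfold c2; lra).
  apply (is_derive_zero_const (fun s => U00 s + c1 * Y2 th s)). intro s.
  auto_derive; auto. eta_reduce.
  rewrite (nf_U00_t HN), u1_t_eq, dY2. ring.
Qed.

Let delta := exp (Y0 th' (T 0)) * Derive T 0 * u1 0 ^ 2 * exp (- Y0 th 0).

Lemma delta_const t : exp (Y0 th' (T t)) * Derive T t * u1 t ^ 2 * exp (- Y0 th t) = delta.
Proof.
  apply (is_derive_zero_const
           (fun s => exp (Y0 th' (T s)) * Derive T s * u1 s ^ 2 * exp (- Y0 th s))).
  intro s. pose proof (HTt s). pose proof (Hu1 s).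
  auto_derive; [repeat split; auto|]. eta_reduce.
  rewrite dY0', dY0, (nf_A11 HN). field. auto.
Qed.

Lemma exp_Y0'_eq t : exp (Y0 th' (T t)) = delta * exp (Y0 th t) / (Derive T t * u1 t ^ 2).
Proof.
  pose proof (HTt t). pose proof (Hu1 t). pose proof (exp_pos (Y0 th t)).
  rewrite <- (delta_const t), exp_Ropp. field. repeat split; auto; lra.
Qed.

Lemma delta_T_t_pos t : delta * Derive T t > 0.
Proof.
  rewrite <- (delta_const t).
  replace (exp (Y0 th' (T t)) * Derive T t * u1 t ^ 2 * exp (- Y0 th t) * Derive T t)
    with (exp (Y0 th' (T t)) * exp (- Y0 th t) * (Derive T t * u1 t) ^ 2) by ring.
  pose proof (exp_pos (Y0 th' (T t))). pose proof (exp_pos (- Y0 th t)).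
  assert (0 < (Derive T t * u1 t) ^ 2).
  { rewrite <- Rsqr_pow2. apply Rsqr_pos_lt, Rmult_integral_contrapositive_currified; auto. }
  apply Rmult_lt_0_compat; [apply Rmult_lt_0_compat|]; assumption.
Qed.

Lemma Y0'_eq t : Y0 th' (T t) = Y0 th t + ln (delta / (Derive T t * u1 t ^ 2)).
Proof.
  pose proof (HTt t). pose proof (Hu1 t). pose proof (exp_pos (Y0 th t)).
  replace (delta / (Derive T t * u1 t ^ 2)) with (exp (Y0 th' (T t) - Y0 th t)).
  - rewrite ln_exp. ring.
  - unfold Rminus. rewrite exp_plus, exp_Y0'_eq, exp_Ropp. field. repeat split; auto; lra.
Qed.

Let c1' := delta / u1 0 + c1 * Y1 th' (T 0).

Lemma c1'_eq t : delta / u1 t + c1 * Y1 th' (T t) = c1'.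
Proof.
  apply (is_derive_zero_const (fun s => delta / u1 s + c1 * Y1 th' (T s))).
  intro s. pose proof (HTt s). pose proof (Hu1 s).
  auto_derive; [repeat split; auto|]. eta_reduce.
  rewrite dY1', exp_Y0'_eq, u1_t_eq. field. auto.
Qed.

Let c0' := Y1 th' (T 0) * u1 0 - c1' * Y1 th 0.

Lemma c0'_eq t : Y1 th' (T t) * u1 t - c1' * Y1 th t = c0'.
Proof.
  apply (is_derive_zero_const (fun s => Y1 th' (T s) * u1 s - c1' * Y1 th s)).
  intro s. pose proof (HTt s). pose proof (Hu1 s).
  auto_derive; [repeat split; auto|]. eta_reduce.
  rewrite <- (c1'_eq s), dY1', exp_Y0'_eq, u1_t_eq, dY1. field. auto.
Qed.

Lemma Y1'_eq t : Y1 th' (T t) = (c1' * Y1 th t + c0') / u1 t.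
Proof. pose proof (Hu1 t). rewrite <- (c0'_eq t). field. auto. Qed.

Lemma delta_eq : c1' * c0 - c1 * c0' = delta.
Proof.
  pose proof (Hu1 0). unfold c0', c0. rewrite <- (c1'_eq 0). field. auto.
Qed.

Let Y2_particular t :=
  delta * Y2 th t / u1 t - delta * X0 t * exp (Y0 th t) / (Derive T t * u1 t ^ 2)
  + c2 * ((c1' * Y1 th t + c0') / u1 t).

Let c3 := Y2 th' (T 0) - Y2_particular 0.

Lemma Y2'_eq t : Y2 th' (T t) = Y2_particular t + c3.
Proof.
  enough (E : Y2 th' (T t) - Y2_particular t = Y2 th' (T 0) - Y2_particular 0)
    by (unfold c3; lra).
  apply (is_derive_zero_const (fun s => Y2 th' (T s) - Y2_particular s)).
  intro s. pose proof (HTt s). pose proof (Hu1 s). unfold Y2_particular.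
  auto_derive; [repeat split; auto; repeat apply Rmult_integral_contrapositive_currified; auto|].
  eta_reduce.
  rewrite dY2', exp_Y0'_eq, (nf_A10 HN), U00_eq, u1_t_eq, dY2, dY1, dY0.
  pose proof (u1_eq s) as Eu. rewrite Eu in *. rewrite <- delta_eq. field. auto.
Qed.

Lemma explicit_form_of_normal_form : explicit_form th phi th'.
Proof.
  exists T, X0, c0, c1, c2, c3, c0', c1'. cbv zeta.
  assert (Eu1 : (fun t => c1 * Y1 th t + c0) = u1)
    by (apply functional_extensionality; intro; symmetry; apply u1_eq).
  rewrite Eu1, delta_eq.
  split; [exact HsT|]. split; [exact HsX0|]. split; [exact delta_T_t_pos|].
  split; [intros t x u; rewrite <- U00_eq; apply HN|].
  split; [apply HN|].
  intro t. rewrite <- U00_eq, <- u1_eq.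
  split; [apply HN|]. split; [apply HN|]. split; [apply Y0'_eq|]. split; [apply Y1'_eq|].
  rewrite Y2'_eq. unfold Y2_particular. ring.
Qed.

End Integration.

Lemma explicit_U1_neq0 th th' (T : R -> R) c0 c1 c0' c1' :
  in_class th -> in_class th' -> smooth1 T -> c1' * c0 - c1 * c0' <> 0 ->
  (forall t, Y1 th' (T t) = (c1' * Y1 th t + c0') / (c1 * Y1 th t + c0)) ->
  forall t, c1 * Y1 th t + c0 <> 0.
Proof.
  intros Hth Hth' HsT Hdelta HY1 t0 E0.
  destruct (Req_dec c1 0) as [E1|E1].
  { apply Hdelta. subst c1. replace c0 with 0 by lra. ring. }
  assert (HN : c1' * Y1 th t0 + c0' <> 0).
  { intro E. apply Hdelta. replace c0 with (- c1 * Y1 th t0) by lra.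
    replace c0' with (- c1' * Y1 th t0) by lra. ring. }
  pose proof (in_class_smooth_Y1 th Hth). pose proof (in_class_smooth_Y1 th' Hth').
  (* division by zero is 0, so the Y1 relation carries no information at zeros of
     c1 Y1 + c0; there is at most one (Y1 is injective) and continuity covers it *)
  assert (HF : Y1 th' (T t0) * (c1 * Y1 th t0 + c0) - (c1' * Y1 th t0 + c0') = 0).
  { apply (continuous_eq0_off_point
             (fun t => Y1 th' (T t) * (c1 * Y1 th t + c0) - (c1' * Y1 th t + c0'))).
    - auto_derive. repeat split; auto.
    - intros t Ht. rewrite HY1. field. intro E. apply Ht.
      apply (in_class_Y1_injective th Hth). apply (Rmult_eq_reg_l c1); lra. }
  rewrite E0 in HF. lra.
Qed.

Lemma normal_form_of_explicit_form th phi th' :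
  in_class th -> in_class th' -> explicit_form th phi th' ->
  exists T u1 X0 U00, normal_form th th' phi T u1 X0 U00.
Proof.
  intros Hth Hth' (T&X0&c0&c1&c2&c3&c0'&c1'&Hex). cbv zeta in Hex.
  destruct Hex as (HsT&HsX0&Hdelta&Hphi&HA2&Hrel).
  pose proof (in_class_smooth_Y0 th Hth). pose proof (in_class_smooth_Y1 th Hth).
  pose proof (in_class_smooth_Y2 th Hth).
  assert (Hu1_t : forall t, Derive (fun s => c1 * Y1 th s + c0) t = c1 * exp (Y0 th t)).
  { intro t. rewrite <- (in_class_Derive_Y1 th Hth). apply is_derive_unique.
    auto_derive; auto. eta_reduce. ring. }
  exists T, (fun t => c1 * Y1 th t + c0), X0, (fun t => c2 - c1 * Y2 th t).
  split; auto.
  - apply smooth1_plus; auto. apply smooth1_mult; auto.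
  - unfold Rminus. apply smooth1_plus; auto. apply smooth1_opp, smooth1_mult; auto.
  - intros t E. specialize (Hdelta t). rewrite E, Rmult_0_r in Hdelta. lra.
  - apply (explicit_U1_neq0 th th' T c0 c1 c0' c1'); auto.
    + intro E. specialize (Hdelta 0). rewrite E, Rmult_0_l in Hdelta. lra.
    + apply Hrel.
  - apply Hrel.
  - apply Hrel.
  - intro t. rewrite (Derive_ext _ _ t Hu1_t), Hu1_t, <- (in_class_Derive_Y0 th Hth).
    apply is_derive_unique. auto_derive; auto. eta_reduce. ring.
  - intro t. rewrite Hu1_t. apply is_derive_unique.
    auto_derive; auto. eta_reduce. rewrite (in_class_Derive_Y2 th Hth). ring.
Qed.

Theorem corollary12 :
  forall (th : tuple) (phi : ptrans) (th' : tuple),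
    admissible th phi th' <->
    (in_class th /\ in_class th' /\
     exists (T X0 : R -> R) (c0 c1 c2 c3 c0' c1' : R),
       let delta := c1' * c0 - c1 * c0' in
       let U1 := fun t => c1 * Y1 th t + c0 in
       let U00 := fun t => c2 - c1 * Y2 th t in
       let Tt := Derive T in
       let Ttt := Derive (Derive T) in
       let U1t := Derive U1 in
       smooth1 T /\ smooth1 X0 /\
       (forall t, delta * Tt t > 0) /\
       (forall t x u,
          PT phi t x u = T t /\
          PX phi t x u = Tt t * U1 t * x + X0 t /\
          PU phi t x u = U1 t * u - U1t t * x + U00 t) /\
       (forall t x,
          A2 th' (T t) (Tt t * U1 t * x + X0 t) = (U1 t) ^ 2 * Tt t * A2 th t x) /\
       (forall t,
          A11 th' (T t) = / Tt t * (A11 th t - Ttt t / Tt t - 2 * U1t t / U1 t) /\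
          A10 th' (T t) = U1 t * A10 th t - Derive X0 t / Tt t + U00 t
                          - X0 t / Tt t * (A11 th t - Ttt t / Tt t - 2 * U1t t / U1 t) /\
          Y0 th' (T t) = Y0 th t + ln (delta / (Tt t * (c1 * Y1 th t + c0) ^ 2)) /\
          Y1 th' (T t) = (c1' * Y1 th t + c0') / (c1 * Y1 th t + c0) /\
          Y2 th' (T t) = delta * Y2 th t / (c1 * Y1 th t + c0)
                         - delta * X0 t * exp (Y0 th t) / (Tt t * (c1 * Y1 th t + c0) ^ 2)
                         + c2 * ((c1' * Y1 th t + c0') / (c1 * Y1 th t + c0)) + c3)).
Proof.
  intros th phi th'. split.
  - intros (Hth & Hth' & Hphi & Hmaps). do 2 (split; [assumption|]).
    destruct phi as [f g h].
    exact (explicit_form_of_normal_form th th' _ _ _ _ _ Hth Hth'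
             (normal_form_of_admissible th th' f g h Hth Hth' Hphi Hmaps)).
  - intros (Hth & Hth' & Hex).
    destruct (normal_form_of_explicit_form th phi th' Hth Hth' Hex) as (T & u1 & X0 & U00 & HN).
    split; [assumption|]. split; [assumption|]. split.
    + exact (point_transf_of_normal_form th th' phi T u1 X0 U00 HN).
    + exact (maps_eq_of_normal_form th th' phi T u1 X0 U00 HN).
Qed.
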